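(* Let $n\ge1$ and let $\mathcal{C}$ be the binary $[2^n-1,n]$ simplex code. Then for every integer $s$ with $1\le s\le n-\ln n$, $\mathcal{C}$ is a functional $(s,\,2^{n-1}-\lceil s/2\rceil\cdot2^{s-1})$-batch code. Moreover, $\mathcal{C}$ can serve every multiset of request vectors $\{\mathbf{v}_1^{(a_1)},\dots,\mathbf{v}_s^{(a_s)}\}$ with $a_i\ge1$, $\sum_{i=1}^s a_i=t$, $\dim\operatorname{Span}\{\mathbf{v}_1,\dots,\mathbf{v}_s\}=s'$ and $t\le 2^{n-1}-\lceil s/2\rceil\cdot2^{s'-1}$ (in the sense that the required $t$ pairwise disjoint recovering sets exist).
   Context: The binary $[2^n-1,n]$ simplex code is the binary linear code whose $n\times(2^n-1)$ generator matrix $\mathbf{G}=[\mathbf{g}_1,\dots,\mathbf{g}_{2^n-1}]$ has as columns all nonzero vectors of $\mathbb{F}_2^n$ (each exactly once). A binary linear code with generator matrix $\mathbf{G}=[\mathbf{g}_1,\dots,\mathbf{g}_N]\in\mathbb{F}_2^{n\times N}$ with nonzero columns is a functional $(s,t)$-batch code ($1\le s\le t$) if for every multiset of request vectors $I=\{\mathbf{v}_1^{(a_1)},\dots,\mathbf{v}_s^{(a_s)}\}$, i.e. nonzero vectors $\mathbf{v}_1,\dots,\mathbf{v}_s\in\mathbb{F}_2^n$ (not necessarily distinct) with multiplicities $a_i\ge1$ and $\sum_i a_i=t$, there exist $t$ pairwise disjoint sets $R_{i,j}\subseteq[N]$ ($i\in[s]$, $j\in[a_i]$) with $\sum_{l\in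 R_{i,j}}\mathbf{g}_l=\mathbf{v}_i$ for all $i,j$. Here $\ln$ is the natural logarithm. *)

From Stdlib Require Reals.
From HB Require Import structures.
From mathcomp Require Import all_boot all_order all_algebra.

Set Implicit Arguments.
Unset Strict Implicit.
Unset Printing Implicit Defensive.

Import GRing.Theory.

Definition simplex_generator (n N : nat) (G : 'M['F_2]_(n, N)) : Prop :=
  [/\ forall j : 'I_N, col j G != 0%R,
      injective (fun j : 'I_N => col j G)
    & forall v : 'cV['F_2]_n, v != 0%R -> exists j : 'I_N, col j G = v].

Definition serves (n N s : nat) (G : 'M['F_2]_(n, N))
    (v : 'I_s -> 'cV['F_2]_n) (a : 'I_s -> nat) : Prop :=
  exists R : 'I_s -> nat -> {set 'I_N},
    (forall (i i' : 'I_s) (j j' : nat), j < a i -> j' < a i' ->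
        (i, j) != (i', j') -> [disjoint R i j & R i' j']) /\
    (forall (i : 'I_s) (j : nat), j < a i ->
        (\sum_(l in R i j) col l G)%R = v i).

Definition functional_batch (n N : nat) (G : 'M['F_2]_(n, N)) (s t : nat) : Prop :=
  forall (v : 'I_s -> 'cV['F_2]_n) (a : 'I_s -> nat),
    (forall i, v i != 0%R) -> (forall i, 0 < a i) -> \sum_(i < s) a i = t ->
    serves G v a.

Definition span_dim (n s : nat) (v : 'I_s -> 'cV['F_2]_n) : nat :=
  \rank (\matrix_(i < s, k < n) v i k ord0)%R.

Definition le_n_minus_ln_n (s n : nat) : Prop :=
  Reals.Rdefinitions.Rle (Reals.Raxioms.INR s)
    (Reals.Rdefinitions.Rminus (Reals.Raxioms.INR n) (Reals.Rpower.ln (Reals.Raxioms.INR n))).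

From HB Require Import structures.
From mathcomp Require Import all_boot all_order all_algebra.
From mathcomp Require Import zify.

Set Implicit Arguments.
Unset Strict Implicit.
Unset Printing Implicit Defensive.

Import GRing.Theory.
Local Open Scope ring_scope.

(* The requests span a subspace V of F_2^n with |V| = 2^r, r = span_dim v.  A
   pair {x, x + e} of vectors recovers e, and the zero vector, which is not a
   column, contributes nothing to a sum; so it suffices to find disjoint such
   pairs in F_2^n.  Requests are served two at a time: for (u, a) and (w, b)
   take whole cosets of V, at most 2(a + b) + |V| vectors, and cut them into
   cosets of H = <u, w>, each of which splits into |H|/2 pairs recovering u, or
   equally w.  What is left is again a union of cosets of V, so after
   ceil(s/2) rounds at most 2t + ceil(s/2) 2^r <= 2^n vectors are used. *)

Lemma disjoint_setDr (T : finType) (A B : {set T}) : [disjoint A & B :\: A].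
Proof. by rewrite disjoint_sym disjoints_subset subsetDr. Qed.

Lemma exists_multiple_between d x : (0 < d)%N -> exists m, (x <= m * d <= x + d.-1)%N.
Proof.
move=> d0; exists ((x + d.-1) %/ d)%N.
have := divn_eq (x + d.-1) d; have := ltn_pmod (x + d.-1) d0.
move: ((x + d.-1) %/ d * d)%N ((x + d.-1) %% d)%N => m r; lia.
Qed.

Section ShiftClosedSets.

Variable T : finZmodType.
Hypothesis char2 : forall x : T, x + x = 0.

Implicit Types (H V F A B D : {set T}) (x y e u w : T) (ds : seq T).

Let addrK2 x y : x + y + y = x. Proof. by rewrite -addrA char2 addr0. Qed.

Let addr_eq02 x y : (x + y == 0) = (x == y).
Proof. by rewrite addr_eq0 -[- y]add0r -(char2 y) addrK. Qed.

Let addr_eql x e : (x + e == x) = (e == 0).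
Proof. by rewrite -{2}(addr0 x) (inj_eq (addrI x)). Qed.

Definition shift_closed H F := forall h x, h \in H -> x \in F -> x + h \in F.

Lemma shift_closedU H F A :
  shift_closed H F -> shift_closed H A -> shift_closed H (F :|: A).
Proof.
move=> hF hA h x hH.
by rewrite !inE => /orP [/(hF h x hH) | /(hA h x hH)] ->; rewrite ?orbT.
Qed.

Lemma shift_closedD H F A :
  shift_closed H F -> shift_closed H A -> shift_closed H (F :\: A).
Proof.
move=> hF hA h x hH; rewrite !inE => /andP [xA xF]; rewrite hF // andbT.
by apply: contra xA => /(hA h _ hH); rewrite addrK2.
Qed.

Lemma shift_closedS H' H F : H' \subset H -> shift_closed H F -> shift_closed H' F.
Proof. by move=> /subsetP sH hF h x /sH; apply: hF. Qed.

Lemma shift_closed_subset H F k : addr_closed H -> shift_closed H F ->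
  (k * #|H| <= #|F|)%N ->
  exists A, [/\ A \subset F, shift_closed H A & #|A| = k * #|H|]%N.
Proof.
move=> [H0 HD] hF; elim: k => [|k IH] hk.
  by exists set0; split; rewrite ?sub0set ?cards0 // => h x _; rewrite inE.
have [A [AF hA cA]] := IH (leq_trans (leq_mul (leqnSn k) (leqnn _)) hk).
have [x xFA] : exists x, x \in F :\: A.
  apply/card_gt0P; rewrite cardsDS // cA.
  have : (0 < #|H|)%N by apply/card_gt0P; exists 0.
  by move: hk; rewrite mulSn; lia.
set C := [set x + h | h in H].
have CFA : C \subset F :\: A.
  by apply/subsetP => _ /imsetP [h hH ->]; apply: (shift_closedD hF hA).
have hC : shift_closed H C.
  by move=> h _ hH /imsetP [h' h'H ->]; rewrite -addrA imset_f // HD.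
exists (A :|: C); split.
- by rewrite subUset AF (subset_trans CFA) ?subsetDl.
- exact: shift_closedU.
- rewrite cardsU disjoint_setI0 ?cards0 ?subn0; last exact: disjointWr CFA (disjoint_setDr _ _).
  by rewrite cA card_imset ?mulSn 1?addnC //; apply: addrI.
Qed.

Definition recovers F ds (R : nat -> {set T}) :=
  (forall k, (k < size ds)%N -> R k \subset F /\ \sum_(x in R k) x = ds`_k) /\
  (forall k k', (k < size ds)%N -> (k' < size ds)%N -> k != k' ->
     [disjoint R k & R k']).

Lemma recoversS A B ds R : A \subset B -> recovers A ds R -> recovers B ds R.
Proof. by move=> AB [hR dR]; split=> // k /hR [RA ->]; rewrite (subset_trans RA AB). Qed.

Lemma recovers_cat A B ds1 ds2 R1 R2 : [disjoint A & B] ->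
  recovers A ds1 R1 -> recovers B ds2 R2 ->
  recovers (A :|: B) (ds1 ++ ds2)
    (fun k => if (k < size ds1)%N then R1 k else R2 (k - size ds1)%N).
Proof.
move=> AB [hR1 dR1] [hR2 dR2]; split=> [k|k k'].
  rewrite size_cat nth_cat => k2; case: ltnP => [/hR1 [RA ->]|k1].
    by rewrite (subset_trans RA) ?subsetUl.
  have [RB ->] := hR2 (k - size ds1)%N ltac:(lia).
  by rewrite (subset_trans RB) ?subsetUr.
rewrite size_cat => k2 k'2 kk'.
have disjR k1 k2' : (k1 < size ds1)%N -> (size ds1 <= k2')%N ->
    (k2' < size ds1 + size ds2)%N -> [disjoint R1 k1 & R2 (k2' - size ds1)%N].
  move=> /hR1 [RA _] ? ?; have [RB _] := hR2 (k2' - size ds1)%N ltac:(lia).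
  exact: disjointWr RB (disjointWl RA AB).
case: ltnP => k1; case: ltnP => k'1.
- exact: dR1.
- exact: disjR.
- by rewrite disjoint_sym; apply: disjR.
- by apply: dR2; lia.
Qed.

Lemma sum_pair x e : e != 0 -> \sum_(y in [set x; x + e]) y = e.
Proof.
move=> e0; rewrite big_setU1 /= ?big_set1 ?inE 1?eq_sym ?addr_eql //.
by rewrite addrA char2 add0r.
Qed.

Lemma recovers_pairs D e m : e != 0 -> shift_closed [set e] D -> (2 * m <= #|D|)%N ->
  exists R, recovers D (nseq m e) R.
Proof.
move=> e0; elim: m D => [|m IH] D De Dm; first by exists (fun=> set0); split.
have [x xD] : exists x, x \in D by apply/card_gt0P; lia.
set P := [set x; x + e].
have PD : P \subset D.
  by apply/subsetP => y; rewrite !inE => /orP [] /eqP -> //; rewrite De ?inE.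
have Pe : shift_closed [set e] P.
  by move=> h y; rewrite !inE => /eqP -> /orP [] /eqP ->; rewrite ?addrK2 eqxx ?orbT.
have cP : #|P| = 2%N by rewrite cards2 eq_sym addr_eql e0.
have [R hR] := IH (D :\: P) (shift_closedD De Pe) ltac:(rewrite cardsDS // cP; lia).
have hP : recovers P [:: e] (fun=> P) by split=> [[]|[|?] [|?]] //; rewrite sum_pair.
eexists; apply: recoversS (recovers_cat (disjoint_setDr _ _) hP hR).
by rewrite subUset PD subsetDl.
Qed.

Lemma recovers_two_closed H A u w a b ma mb : addr_closed H -> u \in H -> w \in H ->
  u != 0 -> w != 0 -> shift_closed H A ->
  (2 * a <= ma * #|H|)%N -> (2 * b <= mb * #|H|)%N -> ((ma + mb) * #|H| <= #|A|)%N ->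
  exists R, recovers A (nseq a u ++ nseq b w) R.
Proof.
move=> Hc; rewrite -!sub1set => uH wH u0 w0 hA ha hb hab.
rewrite mulnDl in hab.
have [D1 [D1A hD1 cD1]] := shift_closed_subset (k := ma) Hc hA ltac:(lia).
have [D2 [D2AD1 hD2 cD2]] :=
  shift_closed_subset (k := mb) Hc (shift_closedD hA hD1) ltac:(rewrite cardsDS //; lia).
have [R1 hR1] := recovers_pairs (m := a) u0 (shift_closedS uH hD1) ltac:(lia).
have [R2 hR2] := recovers_pairs (m := b) w0 (shift_closedS wH hD2) ltac:(lia).
eexists; apply: recoversS (recovers_cat (disjointWr D2AD1 (disjoint_setDr _ _)) hR1 hR2).
by rewrite subUset D1A (subset_trans D2AD1) ?subsetDl.
Qed.

Definition span2 u w : {set T} := [set 0; u; w; u + w].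

Lemma span2_addr_closed u w : addr_closed (span2 u w).
Proof.
split=> [|x y]; first by rewrite !inE eqxx.
rewrite !inE -!orbA => /or4P [] /eqP -> /or4P [] /eqP ->;
  rewrite ?add0r ?addr0 ?char2 ?eqxx ?orbT //.
all: rewrite ?addrA ?(addrC w u) ?addrK2 1?[u + w + u]addrAC ?char2 ?add0r ?eqxx ?orbT //.
Qed.

Lemma span2l u w : u \in span2 u w. Proof. by rewrite !inE eqxx !orbT. Qed.

Lemma span2r u w : w \in span2 u w. Proof. by rewrite !inE eqxx !orbT. Qed.

Lemma span2_sub V u w : addr_closed V -> u \in V -> w \in V -> span2 u w \subset V.
Proof.
move=> [V0 VD] uV wV; apply/subsetP => x.
by rewrite !inE -!orbA => /or4P [] /eqP ->; rewrite // VD.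
Qed.

Lemma card_span2 u w : u != 0 -> w != 0 -> #|span2 u w| = (2 ^ (u != w)).*2.
Proof.
move=> u0 w0.
rewrite /span2 -!setUA !cardsU1 cards1 !inE; case: (eqVneq u w) => [<-|uw] /=.
  by rewrite char2 eqxx (eq_sym 0) (negbTE u0).
rewrite !(eq_sym 0) (negbTE u0) (negbTE w0) addr_eq02 (negbTE uw).
by rewrite !(eq_sym _ (u + w)) addr_eql [u + w]addrC addr_eql u0 w0.
Qed.

Lemma recovers_request_pair V r F u w a b : addr_closed V -> #|V| = (2 ^ r)%N ->
  shift_closed V F -> u \in V :\ 0 -> w \in V :\ 0 ->
  (2 * (a + b) + #|V| <= #|F|)%N ->
  exists A R, [/\ A \subset F, shift_closed V A, (#|A| <= 2 * (a + b) + #|V|)%N &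
                  recovers A (nseq a u ++ nseq b w) R].
Proof.
move=> Vc cV hF /setD1P [u0 uV] /setD1P [w0 wV] hab.
have HV := span2_sub Vc uV wV.
have cH := card_span2 u0 w0; set h := #|span2 u w| in cH HV *.
have [q cVq] : exists q, #|V| = (q * h)%N.
  apply/dvdnP; rewrite cH -mul2n -expnS cV dvdn_exp2l // -(leq_exp2l _ _ (ltnSn 1)).
  by rewrite expnS mul2n -cH -cV subset_leq_card.
have [ma hma] := exists_multiple_between a (expn_gt0 2 (u != w)).
have [mb hmb] := exists_multiple_between b (expn_gt0 2 (u != w)).
have q0 : (0 < q)%N by move: (expn_gt0 2 r); rewrite -cV cVq muln_gt0 => /andP [].
have [k hk] := exists_multiple_between (ma + mb) q0.
(* Round 2a and 2b up to multiples of |H|, and their sum up to a multiple of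
   |V|; as |H| <= 4 the rounding costs at most |V|. *)
have [h2a h2b hkV hmk] : [/\ 2 * a <= ma * h, 2 * b <= mb * h,
    k * #|V| <= 2 * (a + b) + #|V| & (ma + mb) * h <= k * #|V|]%N.
  have hd : (2 ^ (u != w) = 1 \/ 2 ^ (u != w) = 2)%N by case: (u != w); [right | left].
  rewrite cVq mulnA cH -mul2n; move: hma hmb; case: hd => -> ? ?; split; lia.
have [A [AF hA cA]] := shift_closed_subset (k := k) Vc hF (leq_trans hkV hab).
have [R hR] : exists R, recovers A (nseq a u ++ nseq b w) R.
  apply: (recovers_two_closed (span2_addr_closed u w) (span2l u w) (span2r u w) u0 w0
    (shift_closedS HV hA) h2a h2b).
  by rewrite cA.
by exists A, R; split; rewrite ?cA.
Qed.

Definition demand (rs : seq (T * nat)) : seq T := flatten [seq nseq p.2 p.1 | p <- rs].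

Lemma demand_cons u a rs : demand ((u, a) :: rs) = nseq a u ++ demand rs.
Proof. by []. Qed.

Lemma size_demand rs : size (demand rs) = sumn [seq p.2 | p <- rs].
Proof.
by rewrite size_flatten /shape -map_comp; apply/congr1/eq_map => p /=; rewrite size_nseq.
Qed.

Lemma recovers_demand V r F rs : addr_closed V -> #|V| = (2 ^ r)%N ->
  shift_closed V F -> {in rs, forall p, p.1 \in V :\ 0} ->
  (2 * size (demand rs) + uphalf (size rs) * #|V| <= #|F|)%N ->
  exists R, recovers F (demand rs) R.
Proof.
move=> Vc cV; move: {2}(size rs) (leqnn (size rs)) => n.
elim: n rs F => [|n IH] [|[u a] rs] F srs hF hrs hcap;
  try by exists (fun=> set0); split.
have uV : u \in V :\ 0 := hrs (u, a) (mem_head _ _).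
case: rs => [|[w b] rest] in srs hrs hcap *.
  have hcap' : (2 * (a + 0) + #|V| <= #|F|)%N.
    by move: hcap; rewrite demand_cons cats0 size_nseq [uphalf _]/= mul1n addn0.
  have [A [R [AF _ _ hR]]] := recovers_request_pair Vc cV hF uV uV hcap'.
  by exists R; apply: recoversS AF _; rewrite demand_cons cats0; rewrite cats0 in hR.
have wV : w \in V :\ 0 := hrs (w, b) ltac:(by rewrite !inE eqxx orbT).
have hrest : {in rest, forall p, p.1 \in V :\ 0}.
  by move=> p hp; apply: (hrs p); rewrite !inE hp !orbT.
rewrite !demand_cons catA in hcap *.
rewrite !size_cat !size_nseq [uphalf _]/= (mulSn (uphalf _)) in hcap.
have [A [R1 [AF hA cA hR1]]] := recovers_request_pair (a := a) (b := b) Vc cV hF uV wV ltac:(nia).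
have [R2 hR2] : exists R2, recovers (F :\: A) (demand rest) R2.
  apply: IH (shift_closedD hF hA) hrest _; first by move: srs => /=; lia.
  by rewrite cardsDS //; lia.
eexists; apply: recoversS (recovers_cat (disjoint_setDr _ _) hR1 hR2).
by rewrite subUset AF subsetDl.
Qed.

End ShiftClosedSets.

Lemma addr_F2 n (x : 'cV['F_2]_n) : x + x = 0.
Proof. by rewrite -mulr2n -scaler_nat (_ : 2%:R = 0 :> 'F_2) ?scale0r //; apply: val_inj. Qed.

Lemma flatten_index_inj sh r r' c c' : (c < nth 0 sh r)%N -> (c' < nth 0 sh r')%N ->
  flatten_index sh r c = flatten_index sh r' c' -> r = r' /\ c = c'.
Proof.
move=> hc hc' E; split; first by rewrite -(flatten_indexKl hc) E flatten_indexKl.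
by rewrite -(flatten_indexKr hc) E flatten_indexKr.
Qed.

Section RowSpan.

Variables (K : finFieldType) (m n : nat) (M : 'M[K]_(m, n)).

Definition row_span_set : {set 'cV[K]_n} :=
  [set (c *m row_base M)^T | c : 'rV_(\rank M)].

Lemma row_span_set_addr_closed : addr_closed row_span_set.
Proof.
split=> [|_ _ /imsetP [c _ ->] /imsetP [d _ ->]]; apply/imsetP.
  by exists 0; rewrite ?mul0mx ?trmx0.
by exists (c + d); rewrite // mulmxDl linearD.
Qed.

Lemma card_row_span_set : #|row_span_set| = (#|K| ^ \rank M)%N.
Proof.
rewrite card_imset ?card_mx ?mul1n // => c d /trmx_inj.
exact: (row_free_inj (row_base_free M)).
Qed.

Lemma row_in_row_span_set i : (row i M)^T \in row_span_set.
Proof.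
have /submxP [c Ec] : (row i M <= row_base M)%MS by rewrite eq_row_base row_sub.
by apply/imsetP; exists c; rewrite -?Ec.
Qed.

End RowSpan.

Lemma sum_col_preimage n N (G : 'M['F_2]_(n, N)) (S : {set 'cV['F_2]_n}) :
  simplex_generator G ->
  \sum_(l in (fun l => col l G) @^-1: S) col l G = \sum_(x in S) x.
Proof.
case=> hnz hinj hsurj.
rewrite -(big_imset id (h := fun l => col l G)) /=; last by move=> l l' _ _; apply: hinj.
have -> : [set col l G | l in (fun l => col l G) @^-1: S] = S :\ 0.
  apply/setP => x; rewrite !inE; apply/imsetP/andP => [[l] | [x0 xS]].
    by rewrite inE => lS ->; rewrite hnz.
  by have [l hl] := hsurj x x0; exists l; rewrite ?inE hl.
case: (boolP (0 \in S)) => S0; first by rewrite [RHS](big_setD1 _ S0) /= add0r.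
by apply: eq_bigl => x; rewrite !inE; case: eqVneq => // ->; rewrite (negbTE S0).
Qed.

Lemma serves_of_recovers n N s (G : 'M['F_2]_(n, N)) (v : 'I_s -> 'cV['F_2]_n)
    (a : 'I_s -> nat) F R :
  simplex_generator G -> recovers F (demand [seq (v i, a i) | i <- enum 'I_s]) R ->
  serves G v a.
Proof.
move=> hG [hR dR]; set sh := [seq a i | i <- enum 'I_s].
set ss := [seq nseq (a i) (v i) | i <- enum 'I_s].
set rs := [seq (v i, a i) | i <- enum 'I_s] in hR dR *.
have Edem : demand rs = flatten ss by rewrite /demand -map_comp.
have Esh : shape ss = sh by rewrite /shape -map_comp; apply: eq_map => i /=; rewrite size_nseq.
have sh_i (i : 'I_s) : nth 0%N sh i = a i by rewrite (nth_map i) ?size_enum_ord ?nth_ord_enum.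
have idx_lt (i : 'I_s) j : (j < a i)%N -> (flatten_index sh i j < size (demand rs))%N.
  by rewrite Edem size_flatten Esh -sh_i; apply: flatten_indexP.
exists (fun i j => (fun l => col l G) @^-1: R (flatten_index sh i j)); split.
- move=> i i' j j' hj hj' ij.
  suff /(dR _ _ (idx_lt i j hj) (idx_lt i' j' hj')) :
      flatten_index sh i j != flatten_index sh i' j'.
    by rewrite -!setI_eq0 -preimsetI => /eqP ->; rewrite preimset0.
  apply: contra ij => /eqP.
  rewrite -(sh_i i) -(sh_i i') in hj hj'.
  by case/(flatten_index_inj hj hj') => /val_inj -> ->.
- move=> i j hj; rewrite sum_col_preimage //.
  have [_ ->] := hR _ (idx_lt i j hj).
  rewrite Edem nth_flatten Esh flatten_indexKl ?flatten_indexKr ?sh_i //.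
  by rewrite (nth_map i) ?size_enum_ord ?nth_ord_enum // nth_nseq hj.
Qed.

Lemma simplex_serves n N (G : 'M['F_2]_(n, N)) s (v : 'I_s -> 'cV['F_2]_n)
    (a : 'I_s -> nat) t :
  (0 < n)%N -> (0 < s)%N -> simplex_generator G ->
  (forall i, v i != 0) -> (forall i, 0 < a i)%N -> (\sum_(i < s) a i)%N = t ->
  (t <= 2 ^ (n - 1) - uphalf s * 2 ^ (span_dim v - 1))%N -> serves G v a.
Proof.
move=> n0 s0 hG hv ha ht hle.
set M := \matrix_(i < s, k < n) v i k ord0.
have vV i : v i \in row_span_set M :\ 0.
  rewrite !inE hv /=; suff -> : v i = (row i M)^T by apply: row_in_row_span_set.
  by apply/matrixP => k l; rewrite !mxE (ord1 l).
have cV : #|row_span_set M| = (2 ^ \rank M)%N by rewrite card_row_span_set card_Fp.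
have st : (s <= t)%N by rewrite -ht -{1}[s]card_ord -sum1_card leq_sum.
have hexp : (uphalf s * 2 ^ \rank M <= 2 * (uphalf s * 2 ^ (\rank M - 1)))%N.
  by rewrite mulnCA leq_mul2l -expnS leq_pexp2l ?orbT //; lia.
have e2n : (2 ^ n = 2 * 2 ^ (n - 1))%N by rewrite -expnS subn1 prednK.
have [R hR] :
    exists R, recovers [set: 'cV['F_2]_n] (demand [seq (v i, a i) | i <- enum 'I_s]) R.
  apply: (recovers_demand (@addr_F2 n) (row_span_set_addr_closed M) cV).
  - by move=> h x _ _; rewrite inE.
  - by move=> _ /mapP [i _ ->]; apply: vV.
  rewrite cardsT card_mx card_Fp // muln1 size_map size_enum_ord size_demand -map_comp.
  rewrite sumnE big_map big_enum /= ht cV e2n; rewrite /span_dim -/M in hle; lia.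
exact: serves_of_recovers hG hR.
Qed.

Local Close Scope ring_scope.

Theorem mainTheorem11 (n : nat) (G : 'M['F_2]_(n, 2 ^ n - 1)) :
  1 <= n -> simplex_generator G ->
  forall s : nat, 1 <= s -> le_n_minus_ln_n s n ->
    functional_batch G s (2 ^ (n - 1) - (s.+1)./2 * 2 ^ (s - 1)) /\
    (forall (v : 'I_s -> 'cV['F_2]_n) (a : 'I_s -> nat) (t : nat),
        (forall i, v i != 0%R) -> (forall i, 0 < a i) ->
        \sum_(i < s) a i = t ->
        t <= 2 ^ (n - 1) - (s.+1)./2 * 2 ^ (span_dim v - 1) ->
        serves G v a).
Proof.
move=> n0 hG s s0 _; split=> [v a hv ha ht | v a t hv ha ht hle].
  apply: simplex_serves n0 s0 hG hv ha ht _.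
  by rewrite leq_sub2l // leq_mul2l leq_pexp2l ?leq_sub2r ?rank_leq_row ?orbT.
exact: simplex_serves n0 s0 hG hv ha ht hle.
Qed.
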